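(* Let $(X,d)$ be a compact metric space and $(X,f)$ a flow or semiflow that has the weak reparametrized gluing orbit property and is not minimal. Then there exist $x,y\in X$, $\epsilon>0$ and $T>0$ such that $d(f^t(x),x)\ge\epsilon$ for all $t\ge T$; $d(f^t(y),x)\ge\epsilon$ for all $t\ge T$; $d(f^t(y),y)\ge\epsilon$ for all $t\ge T$; and $d(f^t(x),y)\ge\epsilon$ for all $t\ge 0$.
   Context: A flow (resp. semiflow) on $X$ is a continuous family $\{f^t\}$ of continuous maps $X\to X$ indexed by $t\in\mathbb{R}$ (resp. $t\in[0,\infty)$) with $f^0=\mathrm{id}$ and $f^{t+s}=f^t\circ f^s$. $(X,f)$ is minimal if for every $x\in X$ the forward orbit $\{f^t(x):t\ge 0\}$ is dense in $X$. For $L\ge 1$, an $L$-reparametrization is a strictly increasing continuous function $\gamma:[0,\infty)\to[0,\infty)$ with $\gamma(0)=0$ and $L^{-1}\le \frac{\gamma(t_1)-\gamma(t_2)}{t_1-t_2}\le L$ for all $t_1\ne t_2$ in $[0,\infty)$. An orbit sequence of rank $k$ is a finite sequence $\mathscr{C}=\{(x_j,m_j)\in X\times[0,\infty):j=1,\dots,k\}$. A gap for it is a $(k-1)$-tuple $\mathscr{g}=\{t_j\in[0,\infty):j=1,\dots,k-1\}$. Given a reparametrization $\gamma$ and $\epsilon>0$, $(\mathscr{C},\mathscr{g},\gamma)$ is $\epsilon$-shadowed by $z\in X$ if for every $j=1,\dots,k$ and every $t\in[0,m_j]$ one has $d(f^{\gamma(s_j+t)}(z),f^t(x_j))<\epsilon$,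 where $s_1=0$ and $s_j=\sum_{i=1}^{j-1}(m_i+t_i)$ for $j\ge2$. $(X,f)$ has the weak reparametrized gluing orbit property if for every $\epsilon>0$ there is $M=M(\epsilon)>0$ such that for every orbit sequence $\mathscr{C}$ there exist a gap $\mathscr{g}$ with $\max\mathscr{g}\le M$ and an $M$-reparametrization $\gamma$ such that $(\mathscr{C},\mathscr{g},\gamma)$ is $\epsilon$-shadowed by some point of $X$. *)

From Stdlib Require Import Reals Lra List.
Open Scope R_scope.

Definition is_metric (X : Type) (d : X -> X -> R) : Prop :=
  (forall x y, 0 <= d x y) /\
  (forall x y, d x y = 0 <-> x = y) /\
  (forall x y, d x y = d y x) /\
  (forall x y z, d x z <= d x y + d y z).

Definition is_open (X : Type) (d : X -> X -> R) (U : X -> Prop) : Prop :=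
  forall x, U x -> exists r, 0 < r /\ forall y, d x y < r -> U y.

Definition compact_space (X : Type) (d : X -> X -> R) : Prop :=
  forall (I : Type) (U : I -> X -> Prop),
    (forall i, is_open X d (U i)) ->
    (forall x, exists i, U i x) ->
    exists l : list I, forall x, exists i, In i l /\ U i x.

(* f t is f^t; only times t >= 0 are used.  A semiflow:
   f^0 = id, f^(t+s) = f^t o f^s, and (t,x) |-> f^t x jointly continuous
   on [0,oo) x X (hence each f^t continuous). *)
Definition is_semiflow (X : Type) (d : X -> X -> R) (f : R -> X -> X) : Prop :=
  (forall x, f 0 x = x) /\
  (forall t s x, 0 <= t -> 0 <= s -> f (t + s) x = f t (f s x)) /\
  (forall t x, 0 <= t -> forall eps, 0 < eps -> exists delta, 0 < delta /\
     forall s y, 0 <= s -> Rabs (s - t) < delta -> d x y < delta ->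
       d (f s y) (f t x) < eps).

Definition minimal (X : Type) (d : X -> X -> R) (f : R -> X -> X) : Prop :=
  forall x y eps, 0 < eps -> exists t, 0 <= t /\ d (f t x) y < eps.

Definition reparam (L : R) (gamma : R -> R) : Prop :=
  1 <= L /\
  gamma 0 = 0 /\
  (forall t, 0 <= t -> 0 <= gamma t) /\
  (forall t1 t2, 0 <= t1 -> t1 < t2 -> gamma t1 < gamma t2) /\
  (forall t, 0 <= t -> forall eps, 0 < eps -> exists delta, 0 < delta /\
     forall s, 0 <= s -> Rabs (s - t) < delta -> Rabs (gamma s - gamma t) < eps) /\
  (forall t1 t2, 0 <= t1 -> 0 <= t2 -> t1 <> t2 ->
     / L <= (gamma t1 - gamma t2) / (t1 - t2) <= L).

(* An orbit sequence of rank k is C : nat -> X * R, used on indices 0..k-1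
   (C j = (x_{j+1}, m_{j+1})); a gap is g : nat -> R on indices 0..k-2.
   start_time C g j = s_{j+1} = sum_{i<j} (m_i + t_i). *)
Fixpoint start_time {X : Type} (C : nat -> X * R) (g : nat -> R) (j : nat) : R :=
  match j with
  | O => 0
  | S j' => start_time C g j' + snd (C j') + g j'
  end.

Definition orbit_seq {X : Type} (k : nat) (C : nat -> X * R) : Prop :=
  forall j, (j < k)%nat -> 0 <= snd (C j).

Definition gap_for (k : nat) (g : nat -> R) : Prop :=
  forall j, (S j < k)%nat -> 0 <= g j.

Definition shadowed (X : Type) (d : X -> X -> R) (f : R -> X -> X)
  (k : nat) (C : nat -> X * R) (g : nat -> R) (gamma : R -> R) (eps : R) (z : X) : Prop :=
  forall j, (j < k)%nat -> forall t, 0 <= t <= snd (C j) ->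
    d (f (gamma (start_time C g j + t)) z) (f t (fst (C j))) < eps.

Definition weak_reparam_gluing (X : Type) (d : X -> X -> R) (f : R -> X -> X) : Prop :=
  forall eps, 0 < eps -> exists M, 0 < M /\
    forall (k : nat) (C : nat -> X * R), (1 <= k)%nat -> orbit_seq k C ->
      exists g : nat -> R, gap_for k g /\ (forall j, (S j < k)%nat -> g j <= M) /\
      exists gamma, reparam M gamma /\ exists z, shadowed X d f k C g gamma eps z.

(* A non-minimal system has points p, q and e0 > 0 with the forward orbit of p staying e0 away
   from q.  Gluing the trivial orbit segment at q to ever longer orbit segments of p, with gaps
   and time distortion controlled by the gluing constant M, gives points that start near q and,
   from time M^2 on, stay near the orbit of p; by compactness one point z does this forever.
   Then the orbit of z leaves the neighbourhood of q for good at a last time sg, and x = f^sg z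
   and y = z are the required pair: both orbits eventually follow the orbit of p, which keeps
   away from x, y and q, while the orbit of x never comes back near q, hence near y. *)
From Stdlib Require Import Reals Lra Classical List.
Open Scope R_scope.

Section Reparametrization.

Variables (L : R) (gamma : R -> R).
Hypothesis Hgamma : reparam L gamma.

Lemma reparam_increment u v : 0 <= u -> u <= v ->
  (v - u) / L <= gamma v - gamma u <= L * (v - u).
Proof.
  destruct Hgamma as (HL & _ & _ & _ & _ & Hslope).
  intros Hu Huv; destruct (Req_dec u v) as [<- | Hne].
  - replace (u - u) with 0 by ring; unfold Rdiv; lra.
  - destruct (Hslope v u ltac:(lra) Hu ltac:(congruence)) as [Hlo Hhi].
    assert (Hdiff : gamma v - gamma u = (gamma v - gamma u) / (v - u) * (v - u))
      by (field; lra).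
    split.
    + unfold Rdiv at 1; rewrite Rmult_comm, Hdiff.
      apply Rmult_le_compat_r; lra.
    + rewrite Hdiff; apply Rmult_le_compat_r; lra.
Qed.

Lemma reparam_lipschitz u v : 0 <= u -> 0 <= v ->
  Rabs (gamma u - gamma v) <= L * Rabs (u - v).
Proof.
  assert (HL : 0 < L) by (destruct Hgamma; lra).
  intros Hu Hv; destruct (Rle_dec u v) as [Huv | Hvu].
  - destruct (reparam_increment u v Hu Huv).
    assert (0 <= (v - u) / L) by (apply Rmult_le_pos; [lra | left; apply Rinv_0_lt_compat; lra]).
    rewrite (Rabs_minus_sym (gamma u)), (Rabs_minus_sym u), !Rabs_pos_eq; lra.
  - destruct (reparam_increment v u Hv ltac:(lra)).
    assert (0 <= (u - v) / L) by (apply Rmult_le_pos; [lra | left; apply Rinv_0_lt_compat; lra]).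
    rewrite !Rabs_pos_eq; lra.
Qed.

Lemma reparam_extension_continuous : continuity (fun u => gamma (Rmax 0 u)).
Proof.
  assert (HL : 0 < L) by (destruct Hgamma; lra).
  intros u eps Heps; exists (eps / L); split; [apply Rdiv_lt_0_compat; lra |].
  intros v [_ Hv]; simpl in *; unfold Rdist in *.
  apply Rle_lt_trans with (L * Rabs (Rmax 0 v - Rmax 0 u)).
  - apply reparam_lipschitz; apply Rmax_l.
  - apply Rle_lt_trans with (L * Rabs (v - u)).
    + apply Rmult_le_compat_l; [lra |].
      unfold Rmax; destruct (Rle_dec 0 v), (Rle_dec 0 u);
        unfold Rabs; repeat destruct Rcase_abs; lra.
    + apply Rmult_lt_compat_l with (r := L) in Hv; [| lra].
      replace (L * (eps / L)) with eps in Hv by (field; lra); lra.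
Qed.

Lemma reparam_onto a b t : 0 <= a -> a <= b -> gamma a <= t <= gamma b ->
  exists s, a <= s <= b /\ gamma s = t.
Proof.
  intros Ha Hab Ht.
  destruct (IVT_cor (fun u => gamma (Rmax 0 u) - t) a b) as [s [Hs Hs0]].
  - apply continuity_minus; [apply reparam_extension_continuous | apply continuity_const].
    intros ? ?; reflexivity.
  - exact Hab.
  - rewrite !Rmax_right by lra; nra.
  - exists s; split; [exact Hs |].
    rewrite Rmax_right in Hs0 by lra; lra.
Qed.

End Reparametrization.

Lemma last_crossing (phi : R -> R) (rho T : R) :
  (forall t, 0 <= t -> forall eps, 0 < eps -> exists eta, 0 < eta /\
     forall s, 0 <= s -> Rabs (s - t) < eta -> Rabs (phi s - phi t) < eps) ->
  phi 0 <= rho -> (forall t, T <= t -> rho < phi t) ->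
  exists sg, 0 <= sg /\ phi sg = rho /\ forall t, sg < t -> rho < phi t.
Proof.
  intros Hcont H0 Hlate.
  set (E := fun t => 0 <= t /\ phi t <= rho).
  destruct (completeness E) as [sg [Hub Hleast]].
  - exists T; intros t [_ Ht]; apply Rnot_lt_le; intros HTt.
    pose proof (Hlate t ltac:(lra)); lra.
  - exists 0; split; [lra | exact H0].
  - assert (Hsg : 0 <= sg) by (apply Hub; split; [lra | exact H0]).
    assert (Hafter : forall t, sg < t -> rho < phi t).
    { intros t Ht; apply Rnot_le_lt; intros Hle.
      assert (Et : E t) by (split; [lra | exact Hle]); pose proof (Hub t Et); lra. }
    exists sg; split; [exact Hsg |]; split; [| exact Hafter].
    apply Rle_antisym; apply Rnot_lt_le; intros Hlt.
    + destruct (Hcont sg Hsg (phi sg - rho) ltac:(lra)) as [eta [Heta Hnear]].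
      assert (Hclose : exists t, E t /\ sg - eta < t).
      { apply NNPP; intros Hno; assert (Hbound : is_upper_bound E (sg - eta)).
        { intros t Et; apply Rnot_lt_le; intros Ht; apply Hno; exists t; split; assumption. }
        pose proof (Hleast _ Hbound); lra. }
      destruct Hclose as [t [[Ht0 Ht] Hgt]]; pose proof (Hub t (conj Ht0 Ht)).
      assert (Hd : Rabs (phi t - phi sg) < phi sg - rho)
        by (apply Hnear; [exact Ht0 | rewrite Rabs_left1; lra]).
      apply Rabs_def2 in Hd; lra.
    + destruct (Hcont sg Hsg (rho - phi sg) ltac:(lra)) as [eta [Heta Hnear]].
      assert (Hd : Rabs (phi (sg + eta / 2) - phi sg) < rho - phi sg)
        by (apply Hnear; [lra | rewrite Rabs_right; lra]).
      pose proof (Hafter (sg + eta / 2) ltac:(lra)); apply Rabs_def2 in Hd; lra.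
Qed.

Lemma compact_nested_closed (X : Type) (d : X -> X -> R) (K : nat -> X -> Prop) :
  compact_space X d ->
  (forall n, is_open X d (fun w => ~ K n w)) ->
  (forall n m w, (n <= m)%nat -> K m w -> K n w) ->
  (forall n, exists w, K n w) ->
  exists z, forall n, K n z.
Proof.
  intros Hcomp Hclosed Hmono Hne; apply NNPP; intros Hempty.
  destruct (Hcomp nat (fun n w => ~ K n w) Hclosed) as [l Hl].
  - intros w; apply NNPP; intros Hw; apply Hempty; exists w; intros n.
    apply NNPP; intros Hn; apply Hw; exists n; exact Hn.
  - destruct (Hne (list_max l)) as [w Hw].
    destruct (Hl w) as [i [Hi Hout]]; apply Hout.
    apply (Hmono i (list_max l)); [| exact Hw].
    pose proof (proj1 (list_max_le l _) (le_n _)) as Hbound.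
    rewrite Forall_forall in Hbound; exact (Hbound i Hi).
Qed.

Section FlowSpace.

Variables (X : Type) (d : X -> X -> R) (f : R -> X -> X).
Hypothesis Hmetric : is_metric X d.
Hypothesis Hflow : is_semiflow X d f.

Definition is_closed (K : X -> Prop) : Prop := is_open X d (fun w => ~ K w).

Lemma closed_dist_ge c a : is_closed (fun w => a <= d w c).
Proof.
  destruct Hmetric as (_ & _ & Hsym & Htri).
  intros w Hw; exists (a - d w c); split; [lra |].
  intros y Hy Hay; pose proof (Htri y w c); rewrite Hsym in Hy; lra.
Qed.

Lemma closed_dist_le c b : is_closed (fun w => d w c <= b).
Proof.
  destruct Hmetric as (_ & _ & _ & Htri).
  intros w Hw; exists (d w c - b); split; [lra |].
  intros y Hy Hyb; pose proof (Htri w y c); lra.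
Qed.

Lemma closed_and (A B : X -> Prop) :
  is_closed A -> is_closed B -> is_closed (fun w => A w /\ B w).
Proof.
  intros HA HB w Hw; apply not_and_or in Hw as [Hw | Hw].
  - destruct (HA w Hw) as [r [Hr Hball]]; exists r; split; [exact Hr |].
    intros y Hy [Ay _]; exact (Hball y Hy Ay).
  - destruct (HB w Hw) as [r [Hr Hball]]; exists r; split; [exact Hr |].
    intros y Hy [_ By]; exact (Hball y Hy By).
Qed.

Lemma closed_forall (I : Type) (K : I -> X -> Prop) :
  (forall i, is_closed (K i)) -> is_closed (fun w => forall i, K i w).
Proof.
  intros HK w Hw; apply not_all_ex_not in Hw as [i Hi].
  destruct (HK i w Hi) as [r [Hr Hball]]; exists r; split; [exact Hr |].
  intros y Hy HKy; exact (Hball y Hy (HKy i)).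
Qed.

Lemma closed_imp (P : Prop) (K : X -> Prop) :
  (P -> is_closed K) -> is_closed (fun w => P -> K w).
Proof.
  intros HK w Hw; apply imply_to_and in Hw as [HP Hw].
  destruct (HK HP w Hw) as [r [Hr Hball]]; exists r; split; [exact Hr |].
  intros y Hy HKy; exact (Hball y Hy (HKy HP)).
Qed.

Lemma closed_preimage_flow t (K : X -> Prop) :
  0 <= t -> is_closed K -> is_closed (fun w => K (f t w)).
Proof.
  destruct Hmetric as (_ & _ & Hsym & _); destruct Hflow as (_ & _ & Hcont).
  intros Ht HK w Hw; destruct (HK (f t w) Hw) as [r [Hr Hball]].
  destruct (Hcont t w Ht r Hr) as [eta [Heta Hnear]].
  exists eta; split; [exact Heta |]; intros y Hy HKy.
  apply (Hball (f t y)); [| exact HKy].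
  rewrite Hsym; apply Hnear; [exact Ht | | exact Hy].
  rewrite Rminus_diag, Rabs_R0; exact Heta.
Qed.

Definition orbit_avoids (p c : X) (a : R) : Prop := forall s, 0 <= s -> a <= d (f s p) c.

(* [w] lies within [delta] of the closure of the forward orbit of [p], phrased so that it is
   visibly a closed condition on [w]. *)
Definition near_orbit (p : X) (delta : R) (w : X) : Prop :=
  forall c a, orbit_avoids p c a -> a - delta <= d w c.

Lemma orbit_avoids_shift p q c a b :
  orbit_avoids p q a -> d c q <= b -> orbit_avoids p c (a - b).
Proof.
  destruct Hmetric as (_ & _ & Hsym & Htri).
  intros Hpq Hcq s Hs; pose proof (Hpq s Hs); pose proof (Htri (f s p) c q); lra.
Qed.

Lemma near_orbit_of_close p delta w s :
  0 <= s -> d w (f s p) <= delta -> near_orbit p delta w.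
Proof.
  destruct Hmetric as (_ & _ & Hsym & Htri).
  intros Hs Hclose c a Hav; pose proof (Hav s Hs); pose proof (Htri (f s p) w c).
  rewrite Hsym in Hclose; lra.
Qed.

Lemma closed_near_orbit p delta : is_closed (near_orbit p delta).
Proof.
  apply closed_forall; intros c; apply closed_forall; intros a.
  apply closed_imp; intros _; apply closed_dist_ge.
Qed.

Lemma dist_orbit_continuous z q t : 0 <= t -> forall eps, 0 < eps ->
  exists eta, 0 < eta /\ forall s, 0 <= s -> Rabs (s - t) < eta ->
    Rabs (d (f s z) q - d (f t z) q) < eps.
Proof.
  destruct Hmetric as (_ & Hzero & Hsym & Htri); destruct Hflow as (_ & _ & Hcont).
  intros Ht eps Heps; destruct (Hcont t z Ht eps Heps) as [eta [Heta Hnear]].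
  exists eta; split; [exact Heta |]; intros s Hs Hst.
  assert (Hsz : d (f s z) (f t z) < eps).
  { apply Hnear; [exact Hs | exact Hst |]; rewrite (proj2 (Hzero z z) eq_refl); exact Heta. }
  pose proof (Htri (f s z) (f t z) q); pose proof (Htri (f t z) (f s z) q).
  rewrite (Hsym (f t z) (f s z)) in *; apply Rabs_def1; lra.
Qed.

Definition shadows_then_follows (p q : X) (delta T : R) (n : nat) (w : X) : Prop :=
  d w q <= delta /\ forall t, T <= t <= INR n -> near_orbit p delta (f t w).

Lemma closed_shadows_then_follows p q delta T n :
  0 <= T -> is_closed (shadows_then_follows p q delta T n).
Proof.
  intros HT; apply closed_and; [apply closed_dist_le |].
  apply closed_forall; intros t; apply closed_imp; intros Ht.
  apply closed_preimage_flow; [lra | apply closed_near_orbit].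
Qed.

Lemma shadows_then_follows_antitone p q delta T n m w :
  (n <= m)%nat -> shadows_then_follows p q delta T m w -> shadows_then_follows p q delta T n w.
Proof.
  intros Hnm [Hq Hfollow]; split; [exact Hq |]; intros t Ht.
  apply Hfollow; apply le_INR in Hnm; lra.
Qed.

(* Glue the trivial segment at [q] to the segment of [p] of length [M (n + 1)]: the gap and the
   M-reparametrization bring the glued point to [p]'s segment by time [M^2] and keep it there
   beyond time [n]. *)
Lemma gluing_shadows_then_follows p q eps :
  weak_reparam_gluing X d f -> 0 < eps ->
  exists T, 0 < T /\ forall n, exists w, shadows_then_follows p q eps T n w.
Proof.
  destruct Hflow as (Hf0 & _ & _).
  intros Hglue Heps; destruct (Hglue eps Heps) as [M [HM HglueM]].
  exists (M * M); split; [nra |]; intros n.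
  set (m := M * (INR n + 1)).
  assert (Hm : 0 < m) by (unfold m; pose proof (pos_INR n); nra).
  destruct (HglueM 2%nat (fun j => match j with O => (q, 0) | _ => (p, m) end))
    as (g & Hg & HgM & gamma & Hgamma & z & Hsh);
    [auto | intros [|j] _; simpl; lra |].
  pose proof (Hg 0%nat ltac:(auto)); pose proof (HgM 0%nat ltac:(auto)).
  assert (Hgamma0 : gamma 0 = 0) by apply Hgamma.
  exists z; split.
  - pose proof (Hsh 0%nat ltac:(auto) 0 ltac:(simpl; lra)) as Hstart; simpl in Hstart.
    rewrite Rplus_0_r, Hgamma0, !Hf0 in Hstart; lra.
  - intros t Ht.
    destruct (reparam_increment M gamma Hgamma 0 (g 0%nat)) as [_ Hgap]; [lra | lra |].
    destruct (reparam_increment M gamma Hgamma 0 (g 0%nat + m)) as [Hend _]; [lra | lra |].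
    assert (m / M <= (g 0%nat + m - 0) / M)
      by (apply Rmult_le_compat_r; [left; apply Rinv_0_lt_compat |]; lra).
    assert (m / M = INR n + 1) by (unfold m; field; lra).
    destruct (reparam_onto M gamma Hgamma (g 0%nat) (g 0%nat + m) t) as [s [Hs Hgs]];
      [lra | lra | nra |].
    apply near_orbit_of_close with (s - g 0%nat); [lra |].
    pose proof (Hsh 1%nat ltac:(auto) (s - g 0%nat) ltac:(simpl; lra)) as Hfollow.
    simpl in Hfollow; replace (0 + 0 + g 0%nat + (s - g 0%nat)) with s in Hfollow by ring.
    rewrite Hgs in Hfollow; lra.
Qed.

Lemma point_eventually_near_orbit p q delta :
  compact_space X d -> weak_reparam_gluing X d f -> 0 < delta ->
  exists T z, 0 < T /\ d z q <= delta /\ forall t, T <= t -> near_orbit p delta (f t z).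
Proof.
  intros Hcomp Hglue Hdelta.
  destruct (gluing_shadows_then_follows p q delta Hglue Hdelta) as [T [HT Hne]].
  destruct (compact_nested_closed X d (shadows_then_follows p q delta T) Hcomp)
    as [z Hz]; [intros n; apply closed_shadows_then_follows; lra
               | intros n m w; apply shadows_then_follows_antitone | exact Hne |].
  exists T, z; split; [exact HT |]; split; [exact (proj1 (Hz 0%nat)) |].
  intros t Ht; destruct (INR_unbounded t) as [n Hn]; apply (proj2 (Hz n)); lra.
Qed.

End FlowSpace.

Lemma not_minimal_orbit_avoids (X : Type) (d : X -> X -> R) (f : R -> X -> X) :
  ~ minimal X d f -> exists p q e0, 0 < e0 /\ orbit_avoids X d f p q e0.
Proof.
  intros Hnm; apply NNPP; intros Hno; apply Hnm; intros p q e0 He0.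
  apply NNPP; intros Hfar; apply Hno; exists p, q, e0; split; [exact He0 |].
  intros s Hs; apply Rnot_lt_le; intros Hclose; apply Hfar; exists s; split; assumption.
Qed.

Theorem lemma3p2 (X : Type) (d : X -> X -> R) (f : R -> X -> X) :
  is_metric X d -> compact_space X d -> is_semiflow X d f ->
  weak_reparam_gluing X d f -> ~ minimal X d f ->
  exists (x y : X) (eps T : R), 0 < eps /\ 0 < T /\
    (forall t, T <= t -> eps <= d (f t x) x) /\
    (forall t, T <= t -> eps <= d (f t y) x) /\
    (forall t, T <= t -> eps <= d (f t y) y) /\
    (forall t, 0 <= t -> eps <= d (f t x) y).
Proof.
  intros Hmet Hcomp Hsf Hglue Hnm.
  pose proof Hmet as (_ & _ & _ & Htri); pose proof Hsf as (Hf0 & Hfadd & _).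
  destruct (not_minimal_orbit_avoids X d f Hnm) as (p & q & e0 & He0 & Hpq).
  destruct (point_eventually_near_orbit X d f Hmet Hsf p q (e0 / 8) Hcomp Hglue)
    as (T & z & HT & Hzq & Hz); [lra |].
  assert (Hleaves : forall t, T <= t -> e0 / 4 < d (f t z) q)
    by (intros t Ht; pose proof (Hz t Ht q e0 Hpq); lra).
  destruct (last_crossing (fun t => d (f t z) q) (e0 / 4) T
              (dist_orbit_continuous X d f Hmet Hsf z q)) as (sg & Hsg & Hxq & Hafter);
    [rewrite Hf0; lra | exact Hleaves |]; cbv beta in Hxq, Hafter.
  set (x := f sg z) in *.
  assert (Hx_shift : forall t, 0 <= t -> f t x = f (t + sg) z)
    by (intros t Ht; unfold x; rewrite Hfadd; [reflexivity | exact Ht | exact Hsg]).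
  assert (Hpx : orbit_avoids X d f p x (e0 - e0 / 4))
    by (apply orbit_avoids_shift with q; [exact Hmet | exact Hpq | lra]).
  assert (Hpz : orbit_avoids X d f p z (e0 - e0 / 8))
    by (apply orbit_avoids_shift with q; [exact Hmet | exact Hpq | lra]).
  exists x, z, (e0 / 8), T; repeat split; try lra.
  - intros t Ht; rewrite Hx_shift by lra; pose proof (Hz (t + sg) ltac:(lra) x _ Hpx); lra.
  - intros t Ht; pose proof (Hz t Ht x _ Hpx); lra.
  - intros t Ht; pose proof (Hz t Ht z _ Hpz); lra.
  - intros t Ht; rewrite Hx_shift by lra.
    assert (e0 / 4 <= d (f (t + sg) z) q)
      by (destruct Ht as [Ht | <-]; [left; apply Hafter; lra | rewrite Rplus_0_l; fold x; lra]).
    pose proof (Htri (f (t + sg) z) z q); lra.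
Qed.
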